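(* Let $A$ be a finite alphabet. Every infinite LSP word over $A$ is $S_{\rm bLSP}(A)$-adic.
   Context: A finite word $u$ is a left special factor of a word $w$ if there are distinct letters $x\neq y$ with $xu$ and $yu$ factors of $w$. A word is LSP if every left special factor of it is a prefix of it. A bLSP morphism on $A$ is an endomorphism $f$ of $A^*$ such that there is a letter $\alpha$ with $f(\alpha)=\alpha$ and, for every letter $\beta\neq\alpha$, there is a letter $\gamma$ with $f(\beta)=f(\gamma)\beta$; $S_{\rm bLSP}(A)$ is the set of all such morphisms. For a set $S$ of morphisms, an infinite word $\mathbf{w}$ is $S$-adic if there exist $(f_n)_{n\ge1}$ in $S$ and infinite words $(\mathbf{w}_n)_{n\ge1}$ with $\mathbf{w}_1=\mathbf{w}$ and $\mathbf{w}_n=f_n(\mathbf{w}_{n+1})$ for all $n\ge1$. *)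

From mathcomp Require Import all_boot.
Set Implicit Arguments. Unset Strict Implicit. Unset Printing Implicit Defensive.

Definition infword (A : Type) := nat -> A.

Definition pref (A : Type) (w : infword A) (n : nat) : seq A := mkseq w n.

Definition factor_inf (A : Type) (u : seq A) (w : infword A) : Prop :=
  exists i, mkseq (fun k => w (i + k)) (size u) = u.

Definition prefix_inf (A : Type) (u : seq A) (w : infword A) : Prop :=
  pref w (size u) = u.

Definition left_special (A : eqType) (u : seq A) (w : infword A) : Prop :=
  exists x y : A, x <> y /\ factor_inf (x :: u) w /\ factor_inf (y :: u) w.

Definition LSP (A : eqType) (w : infword A) : Prop :=
  forall u : seq A, left_special u w -> prefix_inf u w.

(* An endomorphism of A^* is determined by the images of the letters. *)
Definition morphism (A : Type) := A -> seq A.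

Definition morph_app (A : Type) (f : morphism A) (u : seq A) : seq A :=
  flatten (map f u).

(* [image_inf f w' w] : the image f(w') of the infinite word w' is the
   infinite word w, i.e. f(w') is infinite and w is its limit. *)
Definition image_inf (A : Type) (f : morphism A) (w' w : infword A) : Prop :=
  (forall n, prefix_inf (morph_app f (pref w' n)) w) /\
  (forall m, exists n, m <= size (morph_app f (pref w' n))).

Definition bLSP (A : eqType) (f : morphism A) : Prop :=
  exists alpha : A, f alpha = [:: alpha] /\
    forall beta : A, beta <> alpha ->
      exists gamma : A, f beta = rcons (f gamma) beta.

(* S-adic words (indices shifted to start at 0) *)
Definition S_adic (A : Type) (S : morphism A -> Prop) (w : infword A) : Prop :=
  exists (f : nat -> morphism A) (ws : nat -> infword A),
    (forall n, S (f n)) /\ ws 0 = w /\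
    (forall n, image_inf (f n) (ws n.+1) (ws n)).

From mathcomp Require Import all_boot zify.
From Stdlib Require Import ClassicalEpsilon.

Set Implicit Arguments. Unset Strict Implicit. Unset Printing Implicit Defensive.

(* Let alpha be the first letter of an LSP word w.  A letter b <> alpha is not
   left special, so the letter preceding any occurrence of b is determined by b;
   hence the factor of w running from the last alpha before an occurrence of b
   up to that b depends on b only: call it f(b), and set f(alpha) = alpha.
   Then f is a bLSP morphism, and cutting w before each alpha writes
   w = f(w'), where w' lists the last letters of the blocks.  If x u and y u
   occur in w' with x <> y, then x f(u) alpha and y f(u) alpha occur in w, so
   f(u) alpha is a prefix of w = f(w'); as the letter alpha marks the block
   boundaries, u is a prefix of w'.  So w' is LSP again, and the
   desubstitution can be iterated. *)

Section Mkseq.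
Variable T : Type.
Implicit Types g h : nat -> T.

Lemma eq_in_mkseq g h n : (forall k, k < n -> g k = h k) -> mkseq g n = mkseq h n.
Proof. by move=> E; apply/eq_in_map => k; rewrite mem_iota => /andP[_ /E]. Qed.

Lemma mkseq_eq_in g h n : mkseq g n = mkseq h n -> forall k, k < n -> g k = h k.
Proof. by move=> /eq_in_map E k lt_kn; apply: E; rewrite mem_iota. Qed.

Lemma mkseqD g m n : mkseq g (m + n) = mkseq g m ++ mkseq (fun k => g (m + k)) n.
Proof. by rewrite /mkseq iotaD map_cat -[0 + m]addn0 iotaDl -map_comp. Qed.

Lemma mkseq_cons g n : mkseq g n.+1 = g 0 :: mkseq (fun k => g k.+1) n.
Proof. by rewrite -add1n mkseqD. Qed.

End Mkseq.

Lemma S_adic_of_desubstitution (A : Type) (S : morphism A -> Prop)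
    (P : infword A -> Prop) :
  (forall v, P v -> exists g v', [/\ S g, P v' & image_inf g v' v]) ->
  forall w, P w -> S_adic S w.
Proof.
move=> desub w Pw.
have step (v : {v | P v}) :
    {gv : morphism A * {v | P v} | S gv.1 /\ image_inf gv.1 (sval gv.2) (sval v)}.
  case: v => v Pv; apply: constructive_indefinite_description.
  have [g [v' [Sg Pv' im]]] := desub v Pv.
  by exists (g, exist _ v' Pv').
pose W := fix W n := if n is n.+1 then (sval (step (W n))).2 else exist P w Pw.
exists (fun n => (sval (step (W n))).1), (fun n => sval (W n)).
split=> [n|]; first exact: (svalP (step (W n))).1.
by split=> // n; apply: (svalP (step (W n))).2.
Qed.

Section LSPDesubstitution.
Variables (A : finType) (w : infword A).
Hypothesis w_LSP : LSP w.
Local Notation alpha := (w 0).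

Lemma LSP_pred_eq i j : w i.+1 = w j.+1 -> w i.+1 <> alpha -> w i = w j.
Proof.
move=> eq_ij neq_alpha; case: (eqVneq (w i) (w j)) => // neq_pred.
have special : left_special [:: w i.+1] w.
  exists (w i), (w j); split; first exact/eqP.
  by split; [exists i | exists j]; rewrite /mkseq /= addn0 addn1 ?eq_ij.
by case: neq_alpha; case: (w_LSP special).
Qed.

Fixpoint block_to (p : nat) : seq A :=
  if p is q.+1 then
    if w q.+1 == alpha then [:: alpha] else rcons (block_to q) (w q.+1)
  else [:: alpha].

Lemma block_to_first p : w p = alpha -> block_to p = [:: alpha].
Proof. by case: p => //= q ->; rewrite eqxx. Qed.

Lemma block_to_eq p p' : w p = w p' -> block_to p = block_to p'.
Proof.
elim: p p' => [|q IH] p' eq_pp'; first by rewrite (block_to_first (esym eq_pp')).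
have [first_q|not_first_q] := eqVneq (w q.+1) alpha.
  by rewrite (block_to_first first_q) block_to_first // -eq_pp'.
case: p' eq_pp' => [|q'] eq_pp'; first by rewrite eq_pp' eqxx in not_first_q.
rewrite /= -eq_pp' (negbTE not_first_q); congr rcons.
by apply/IH/LSP_pred_eq => //; apply/eqP.
Qed.

Lemma block_toE s p : s <= p -> w s = alpha ->
    (forall q, s < q <= p -> w q <> alpha) ->
  block_to p = mkseq (fun k => w (s + k)) (p - s).+1.
Proof.
elim: p => [|p IH] le_sp first_s gap; first by have -> : s = 0 by lia.
have [eq_sp|neq_sp] := eqVneq s p.+1.
  by subst s; rewrite subnn /= first_s eqxx /mkseq /= addn0 first_s.
have not_first_p : w p.+1 <> alpha by apply: gap; lia.
rewrite /= subSn; last by lia.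
rewrite mkseqS; case: eqP => // _.
rewrite IH //; [|lia|by move=> q lt_q; apply: gap; lia].
by congr rcons; congr w; lia.
Qed.

Lemma size_block_to_add n k : (forall q, n < q <= n + k -> w q <> alpha) ->
  size (block_to (n + k)) = size (block_to n) + k.
Proof.
elim: k => [|k IH] gap; first by rewrite !addn0.
rewrite addnS /=; case: eqP => [first_nk|_].
  by case: (gap (n + k).+1) => //; lia.
by rewrite size_rcons IH ?addnS // => q lt_q; apply: gap; lia.
Qed.

(* Otherwise the |A|+1 blocks ending after n would have pairwise distinct
   lengths, although a block is determined by its last letter. *)
Lemma first_letter_recurrent n : exists m, (n < m) && (w m == alpha).
Proof.
case: (boolP [exists i : 'I_#|A|.+1, w (n + i.+1) == alpha]).
  by case/existsP=> i first_i; exists (n + i.+1); rewrite first_i andbT; lia.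
rewrite negb_exists => /forallP no_first.
have gap q : n < q <= n + #|A|.+1 -> w q <> alpha.
  move=> lt_q; have lt_i : q - n - 1 < #|A|.+1 by lia.
  have -> : q = n + (Ordinal lt_i).+1 by rewrite /=; lia.
  by move/eqP; apply/negP/no_first.
pose g (i : 'I_#|A|.+1) := w (n + i.+1).
have g_inj : injective g.
  move=> i j /block_to_eq/(congr1 size); rewrite -!addSnnS !size_block_to_add.
  - by move/addnI/val_inj.
  - by move=> q lt_q; apply: gap; have := ltn_ord j; lia.
  - by move=> q lt_q; apply: gap; have := ltn_ord i; lia.
by have := leq_card g g_inj; rewrite card_ord; lia.
Qed.

Definition next_first (n : nat) : nat := ex_minn (first_letter_recurrent n).

Lemma next_firstP n : [/\ n < next_first n, w (next_first n) = alpha &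
  forall q, n < q < next_first n -> w q <> alpha].
Proof.
rewrite /next_first; case: ex_minnP => m /andP[lt_nm /eqP first_m] min_m.
split=> // q lt_q first_q.
suff : m <= q by lia.
by apply: min_m; rewrite first_q eqxx andbT; lia.
Qed.

Fixpoint occ (k : nat) : nat := if k is k.+1 then next_first (occ k) else 0.

Lemma occ_lt k : occ k < occ k.+1.
Proof. by case: (next_firstP (occ k)). Qed.

Lemma occ_first k : w (occ k) = alpha.
Proof. by case: k => //= k; case: (next_firstP (occ k)). Qed.

Lemma occ_gap k q : occ k < q < occ k.+1 -> w q <> alpha.
Proof. by case: (next_firstP (occ k)) => _ _; apply. Qed.

Lemma occ_mono : {homo occ : k l / k <= l}.
Proof. by apply: homo_leq => [//|l k m|k]; [apply: leq_trans | apply/ltnW/occ_lt]. Qed.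

Lemma occ_ge k : k <= occ k.
Proof. by elim: k => // k IH; apply: leq_ltn_trans IH (occ_lt k). Qed.

Lemma occ_next k m : occ k < m -> w m = alpha ->
  (forall q, occ k < q < m -> w q <> alpha) -> m = occ k.+1.
Proof.
move=> lt_km first_m gap; case: (ltngtP m (occ k.+1)) => // [lt_m|gt_m].
- by case: (@occ_gap k m); rewrite ?lt_km.
- by case: (gap (occ k.+1)); [rewrite occ_lt | apply: occ_first].
Qed.

Definition derived (n : nat) : A := w (occ n.+1).-1.

(* Letters not occurring in w get the block [alpha; b], keeping [block] bLSP. *)
Definition block (b : A) : seq A :=
  match excluded_middle_informative (exists p, w p = b) with
  | left occurs => block_to (proj1_sig (constructive_indefinite_description _ occurs))
  | right _ => [:: alpha; b]
  end.

Lemma block_letter p : block (w p) = block_to p.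
Proof.
rewrite /block; case: excluded_middle_informative => [occurs|[]]; last by exists p.
by case: constructive_indefinite_description => /= p'; apply: block_to_eq.
Qed.

Lemma block_derived m :
  block (derived m) = mkseq (fun k => w (occ m + k)) (occ m.+1 - occ m).
Proof.
have lt_m := occ_lt m.
rewrite /derived block_letter (@block_toE (occ m)) ?occ_first //; last first.
- by move=> q lt_q; apply: (occ_gap (k := m)); lia.
- lia.
- by congr mkseq; lia.
Qed.

Lemma morph_app_block_derived i n :
  morph_app block (mkseq (fun k => derived (i + k)) n) =
  mkseq (fun k => w (occ i + k)) (occ (i + n) - occ i).
Proof.
elim: n => [|n IH]; first by rewrite addn0 subnn.
rewrite mkseqS /morph_app map_rcons flatten_rcons -/(morph_app _ _) IH block_derived.
have le_in := occ_mono (leq_addr n i); have lt_in := occ_lt (i + n).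
have -> : occ (i + n.+1) - occ i =
  (occ (i + n) - occ i) + (occ (i + n).+1 - occ (i + n)) by rewrite addnS; lia.
rewrite mkseqD; congr cat; apply: eq_in_mkseq => k _; congr w; lia.
Qed.

Lemma bLSP_block : bLSP block.
Proof.
exists alpha; split=> [|b neq_b]; first by rewrite block_letter.
case: (excluded_middle_informative (exists p, w p = b)) => [[p eq_b]|not_occ].
  subst b; case: p neq_b => [//|q] not_first_q.
  by exists (w q); rewrite !block_letter /=; case: eqP.
exists alpha; rewrite block_letter /block.
by case: excluded_middle_informative.
Qed.

Lemma image_block_derived : image_inf block derived w.
Proof.
have image_pref n : morph_app block (pref derived n) = mkseq w (occ n).
  by rewrite [LHS](morph_app_block_derived 0) subn0.
split=> [n|m]; first by rewrite /prefix_inf image_pref size_mkseq.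
by exists m; rewrite image_pref size_mkseq occ_ge.
Qed.

Lemma rcons_morph_app_block_derived i n :
  rcons (morph_app block (mkseq (fun k => derived (i + k)) n)) alpha =
  mkseq (fun k => w (occ i + k)) (occ (i + n) - occ i).+1.
Proof.
by rewrite morph_app_block_derived mkseqS subnKC ?occ_first // occ_mono ?leq_addr.
Qed.

Lemma factor_derived_cons i m :
  factor_inf (derived i :: mkseq (fun k => w (occ i.+1 + k)) m) w.
Proof.
have lt_i := occ_lt i.
exists (occ i.+1).-1; rewrite [size _]/= size_mkseq mkseq_cons addn0; congr cons.
by apply: eq_in_mkseq => k _; congr w; lia.
Qed.

Section Shift.
Variables a L : nat.
Hypothesis agree : forall k, k <= occ (a + L) - occ a -> w k = w (occ a + k).

Lemma occ_shift k : k <= L -> occ (a + k) = occ a + occ k.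
Proof.
elim: k => [|k IH] le_kL; first by rewrite !addn0.
have {}IH := IH (ltnW le_kL).
have le_akL := occ_mono (leq_add (leqnn a) le_kL).
have lt_ak := occ_lt (a + k).
rewrite addnS in le_akL *.
suff : occ (a + k).+1 - occ a = occ k.+1 by lia.
apply: occ_next; first lia.
- by rewrite agree ?subnKC ?occ_first //; lia.
- by move=> q lt_q; rewrite agree; [apply: (@occ_gap (a + k)) | ]; lia.
Qed.

Lemma derived_shift k : k < L -> derived (a + k) = derived k.
Proof.
move=> lt_kL; have shift := occ_shift lt_kL.
have le_akL := occ_mono (leq_add (leqnn a) lt_kL).
have lt_k := occ_lt k.
rewrite /derived -addnS shift.
have -> : (occ a + occ k.+1).-1 = occ a + (occ k.+1).-1 by lia.
by rewrite -agree //; lia.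
Qed.

End Shift.

Lemma LSP_derived : LSP derived.
Proof.
move=> u [x [y [neq_xy [[i xu_at_i] [j yu_at_j]]]]].
move: xu_at_i yu_at_j; rewrite /= !mkseq_cons !addn0 => -[x_at_i u_at_i] [y_at_j u_at_j].
subst x y; set L := size u in u_at_i u_at_j *.
have u_from l : mkseq (fun k => derived (l + k.+1)) L = u ->
    u = mkseq (fun k => derived (l.+1 + k)) L.
  by move=> <-; apply: eq_in_mkseq => k _; rewrite addnS.
have pre : prefix_inf (rcons (morph_app block u) alpha) w.
  apply: w_LSP; exists (derived i), (derived j); split=> //.
  split; [rewrite (u_from i) | rewrite (u_from j)] => //;
    rewrite rcons_morph_app_block_derived; apply: factor_derived_cons.
rewrite /prefix_inf (u_from i) // rcons_morph_app_block_derived size_mkseq in pre.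
have agree := mkseq_eq_in pre.
rewrite /prefix_inf /pref (u_from i) // size_mkseq; apply: eq_in_mkseq => k lt_k.
by rewrite (derived_shift (a := i.+1) (L := L)) // => l le_l; apply: agree.
Qed.

End LSPDesubstitution.

Theorem proposition1 (A : finType) (w : nat -> A) :
  LSP w -> S_adic (@bLSP A) w.
Proof.
apply: S_adic_of_desubstitution => v v_LSP.
exists (block v), (derived v_LSP).
by split; [apply: bLSP_block | apply: LSP_derived | apply: image_block_derived].
Qed.
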